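(* Let $p\geq3$ be prime. Then in $\mathbb{L}_p$, \[\left(\sum_{l=0}^{p-1}\frac{(-1)^l}{l!}\zeta_{2(p-1)}^l p^{\frac{l}{p-1}}\right)^p-1=O\left(p^{2+\frac{1}{p-1}}\right).\]
   Context: $\mathbb{L}_p$ is the $p$-adic Mal'cev–Neumann field of formal sums $\sum_{x\in\mathbb{Q}}[\alpha_x]p^x$ ($\alpha_x\in\bar{\mathbb{F}}_p$, $[\cdot]$ Teichmüller lift, well-ordered support), containing $\mathbb{Q}_p$, valuation $v_p$ = minimum of support; $p^x$ is the element with support $\{x\}$ and coefficient $1$. $\zeta_{2(p-1)}$ is (the Teichmüller lift of) a fixed primitive $2(p-1)$-th root of unity in $\bar{\mathbb{F}}_p$; $l!$ is the ordinary factorial. $\alpha=O(p^x)$ means $v_p(\alpha)\geq x$. *)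

From HB Require Import structures.
From mathcomp Require Import all_boot all_order all_algebra.
Set Implicit Arguments. Unset Strict Implicit. Unset Printing Implicit Defensive.
Import Order.TTheory GRing.Theory Num.Theory.
Local Open Scope ring_scope.

(* p-adic valuation on the rationals (value for q = 0 is irrelevant). *)
Definition padic_val_rat (p : nat) (q : rat) : int :=
  (logn p `|numq q|)%:Z - (logn p `|denq q|)%:Z.

(* v : K -> rat is a (rank-one, Q-valued) valuation on the nonzero elements
   of K which restricts to v_p on Q.  v 0 is meaningless (stands for +oo). *)
Record pvaluation (p : nat) (K : fieldType) (v : K -> rat) : Prop := {
  pval_mul : forall x y, x != 0 -> y != 0 -> v (x * y) = v x + v y;
  pval_add : forall x y, x != 0 -> y != 0 -> x + y != 0 ->
               Num.min (v x) (v y) <= v (x + y);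
  pval_rat : forall q : rat, q != 0 -> v (ratr q) = (padic_val_rat p q)%:~R
}.

(* alpha = O(p^x)  :<=>  v(alpha) >= x  (with v(0) = +oo). *)
Definition bigOp (K : fieldType) (v : K -> rat) (a : K) (x : rat) : Prop :=
  a = 0 \/ x <= v a.

From HB Require Import structures.
From mathcomp Require Import all_boot all_order all_algebra.
From mathcomp Require Import ring lra zify.
Import Order.TTheory GRing.Theory Num.Theory.
Local Open Scope ring_scope.
Set Implicit Arguments. Unset Strict Implicit.

(* Let T be the exponential series truncated below degree p and x := - zeta pi,
   so that the sum is T(x), x^(p-1) = -p and v(x) = 1/(p-1). Write
   T^p = sum_k c_k X^k. Since T' = T - X^(p-1)/(p-1)!, comparing coefficients
   in (T^p)' = p T^(p-1) T' gives (k+1) c_(k+1) = p (c_k - d_(k-p+1)/(p-1)!),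
   where d_j are the (p-integral) coefficients of T^(p-1). Hence every c_k is p-integral, p divides c_k
   when p does not divide k, c_k = p^k/k! for k < p and
   c_p = (p^(p-1) - 1)/(p-1)!. All terms c_k x^k with k <> 0, 1, p then have
   valuation at least 2 + 1/(p-1), and by Wilson's theorem
   c_1 x + c_p x^p = p x (1 + (p-1)! - p^(p-1))/(p-1)! is divisible by p^2 x. *)

Lemma pchar0_natf_neq0 (K : fieldType) n :
  [pchar K] =i pred0 -> (0 < n)%N -> (n%:R : K) != 0.
Proof. by move=> K0 n_gt0; rewrite (pcharf0P K).1 // -lt0n. Qed.

Section Valuation.
Variables (p : nat) (K : fieldType) (v : K -> rat).
Hypotheses (K0 : [pchar K] =i pred0) (Hv : pvaluation p v).

Lemma pval_natr n : (0 < n)%N -> v n%:R = (logn p n)%:R.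
Proof.
move=> n_gt0; have nq : (n%:R : rat) != 0 by rewrite pnatr_eq0 -lt0n.
have := pval_rat Hv nq; rewrite ratr_nat => ->.
rewrite -[n%:R]/((n%:Z)%:~R : rat) /padic_val_rat numq_int denq_int absz_nat.
by rewrite logn1 subr0 pmulrn.
Qed.

Lemma pval1 : v 1 = 0.
Proof. by have := pval_natr (ltn0Sn 0); rewrite logn1. Qed.

Lemma pval_natr_notdvd n : ~~ (p %| n)%N -> v n%:R = 0.
Proof.
move=> p_ndvd; have n_gt0 : (0 < n)%N by case: n p_ndvd; rewrite ?dvdn0.
by rewrite pval_natr // lognE (negbTE p_ndvd) !andbF.
Qed.

Lemma pvalV y : y != 0 -> v y^-1 = - v y.
Proof.
move=> y0; have := pval_mul Hv y0 (invr_neq0 y0).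
rewrite mulfV // pval1 => h; lra.
Qed.

Lemma pvalX y n : y != 0 -> v (y ^+ n) = n%:R * v y.
Proof.
move=> y0; elim: n => [|n IH]; first by rewrite expr0 pval1 mul0r.
by rewrite exprS (pval_mul Hv y0) ?expf_neq0 // IH mulrS mulrDl mul1r.
Qed.

Lemma pvalN y : y != 0 -> v (- y) = v y.
Proof.
move=> y0; have m0 : (-1 : K) != 0 by rewrite oppr_eq0 oner_eq0.
have vm1 : v (-1) = 0.
  have := pvalX 2 m0; rewrite sqrrN expr1n pval1 => /esym/eqP.
  by rewrite mulf_eq0 pnatr_eq0 => /eqP.
by rewrite -mulN1r (pval_mul Hv m0 y0) vm1 add0r.
Qed.

Lemma bigOp_le a r s : bigOp v a r -> s <= r -> bigOp v a s.
Proof. by move=> [->|h] sr; [left|right; apply: le_trans h]. Qed.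

Lemma bigOpD a b r : bigOp v a r -> bigOp v b r -> bigOp v (a + b) r.
Proof.
move=> [->|ha]; first by rewrite add0r.
move=> [->|hb]; first by rewrite addr0; right.
have [->|a0] := eqVneq a 0; first by rewrite add0r; right.
have [->|b0] := eqVneq b 0; first by rewrite addr0; right.
have [->|ab0] := eqVneq (a + b) 0; first by left.
by right; apply: le_trans (pval_add Hv a0 b0 ab0); rewrite le_min ha hb.
Qed.

Lemma bigOpN a r : bigOp v a r -> bigOp v (- a) r.
Proof.
move=> [->|h]; first by rewrite oppr0; left.
have [->|a0] := eqVneq a 0; first by rewrite oppr0; left.
by right; rewrite pvalN.
Qed.

Lemma bigOpM a b r s : bigOp v a r -> bigOp v b s -> bigOp v (a * b) (r + s).
Proof.
move=> [->|ha]; first by rewrite mul0r; left.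
move=> [->|hb]; first by rewrite mulr0; left.
have [->|a0] := eqVneq a 0; first by rewrite mul0r; left.
have [->|b0] := eqVneq b 0; first by rewrite mulr0; left.
by right; rewrite (pval_mul Hv a0 b0) lerD.
Qed.

Lemma bigOpX a r n : bigOp v a r -> bigOp v (a ^+ n) (n%:R * r).
Proof.
move=> ha; elim: n => [|n IH].
  by rewrite expr0 mul0r; right; rewrite pval1.
by rewrite exprS mulrS mulrDl mul1r; apply: bigOpM.
Qed.

Lemma bigOp_sum (I : Type) (s : seq I) (P : pred I) (F : I -> K) r :
  (forall i, P i -> bigOp v (F i) r) -> bigOp v (\sum_(i <- s | P i) F i) r.
Proof.
move=> hF; apply: (big_ind (fun y => bigOp v y r)) => //; first by left.
move=> x y hx hy; exact: bigOpD hx hy.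
Qed.

Lemma bigOp_natr n : bigOp v n%:R 0.
Proof. by case: n => [|n]; [left|right; rewrite pval_natr // ler0n]. Qed.

Lemma bigOp_invr_natr n : ~~ (p %| n)%N -> bigOp v n%:R^-1 0.
Proof.
move=> p_ndvd; have n_gt0 : (0 < n)%N by case: n p_ndvd; rewrite ?dvdn0.
by right; rewrite pvalV ?pchar0_natf_neq0 // pval_natr_notdvd // oppr0.
Qed.

Lemma bigOp_coefX (a : {poly K}) :
  (forall i, bigOp v a`_i 0) -> forall m i, bigOp v (a ^+ m)`_i 0.
Proof.
move=> ha; elim=> [|m IH] i; first by rewrite expr0 coef1; apply: bigOp_natr.
rewrite exprS coefM; apply: bigOp_sum => j _.
by apply: bigOp_le (bigOpM (ha _) (IH _)) _; rewrite addr0.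
Qed.

End Valuation.

Definition truncexp {K : fieldType} (n : nat) : {poly K} :=
  \poly_(l < n) (l`!%:R)^-1.

Section TruncatedExp.
Variables (K : fieldType) (n : nat).
Hypotheses (K0 : [pchar K] =i pred0) (n_gt0 : (0 < n)%N).
Local Notation T := (truncexp n : {poly K}).

Lemma fact_natf_neq0 k : (k`!%:R : K) != 0.
Proof. exact: pchar0_natf_neq0 (fact_gt0 k). Qed.

Lemma coef0_truncexp_exp m : (T ^+ m)`_0 = 1.
Proof.
rewrite -horner_coef0 horner_exp horner_coef0 coef_poly n_gt0.
by rewrite fact0 invr1 expr1n.
Qed.

Lemma deriv_truncexp : T^`() = T - (n.-1`!%:R)^-1 *: 'X^(n.-1).
Proof.
apply/polyP => i; rewrite coef_deriv coefB coefZ coefXn !coef_poly.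
have [lt_in|lt_ni|<-] := ltngtP i.+1 n; last by rewrite eqxx mulr1 subrr mul0rn.
- have /negbTE-> : i != n.-1 by lia.
  rewrite mulr0 subr0 factS natrM -mulr_natr; field.
  by rewrite fact_natf_neq0 nat1r pchar0_natf_neq0.
- have /negbTE-> : i != n.-1 by lia.
  by rewrite mulr0 subr0 mul0rn.
Qed.

Lemma coef_truncexp_exp_rec k :
  (T ^+ n)`_k.+1 * k.+1%:R =
  n%:R * ((T ^+ n)`_k - (n.-1`!%:R)^-1 * ('X^(n.-1) * T ^+ n.-1)`_k).
Proof.
have dTn : (T ^+ n)^`() =
    (T ^+ n - (n.-1`!%:R)^-1 *: ('X^(n.-1) * T ^+ n.-1)) *+ n.
  by rewrite deriv_exp deriv_truncexp mulrBl -exprS prednK // scalerAl.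
have := congr1 (fun q : {poly K} => q`_k) dTn.
by rewrite coef_deriv coefMn coefB coefZ mulr_natr => ->; rewrite mulr_natl.
Qed.

Lemma coef_truncexp_exp_lt k : (k < n)%N -> (T ^+ n)`_k = n%:R ^+ k / k`!%:R.
Proof.
elim: k => [|k IH] lt_kn.
  by rewrite coef0_truncexp_exp expr0 fact0 invr1 mulr1.
have := coef_truncexp_exp_rec k; rewrite coefXnM ifT; last by lia.
rewrite mulr0 subr0 IH ?(ltnW lt_kn) // => h.
apply: (mulIf (pchar0_natf_neq0 K0 (ltn0Sn k))); rewrite h factS natrM exprS.
by field; rewrite fact_natf_neq0 nat1r pchar0_natf_neq0.
Qed.

Lemma coef_truncexp_exp_order :
  (T ^+ n)`_n = (n%:R ^+ n.-1 - 1) / n.-1`!%:R.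
Proof.
have := coef_truncexp_exp_rec n.-1; rewrite coefXnM ltnn subnn prednK //.
have lt_n1n : (n.-1 < n)%N by lia.
rewrite coef0_truncexp_exp (coef_truncexp_exp_lt lt_n1n) => h.
apply: (mulIf (pchar0_natf_neq0 K0 n_gt0)); rewrite h.
by field; rewrite fact_natf_neq0.
Qed.

End TruncatedExp.

Lemma prime_ndvd_fact p l : prime p -> (l < p)%N -> ~~ (p %| l`!)%N.
Proof.
move=> p_pr; elim: l => [|l IH] lt_lp.
  by rewrite fact0 dvdn1; apply: contraTN p_pr => /eqP ->.
by rewrite factS Euclid_dvdM // negb_or IH ?(ltnW lt_lp) // gtnNdvd.
Qed.

Lemma prim_expr_half (R : idomainType) m (z : R) :
  (0 < m)%N -> (2 * m).-primitive_root z -> z ^+ m = -1.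
Proof.
move=> m_gt0 z_prim; have := prim_expr_order z_prim.
rewrite mulnC exprM => /eqP; rewrite sqrf_eq1 => /orP[/eqP zm1|/eqP //].
have := prim_order_dvd z_prim m; rewrite zm1 eqxx gtnNdvd //; lia.
Qed.

Section TruncatedExpPAdic.
Variables (p : nat) (K : fieldType) (v : K -> rat).
Hypotheses (K0 : [pchar K] =i pred0) (Hv : pvaluation p v) (p_pr : prime p).
Local Notation T := (truncexp p : {poly K}).

Let p_gt0 : (0 < p)%N := prime_gt0 p_pr.

Lemma pval_natr_prime : v p%:R = 1.
Proof. by rewrite (pval_natr Hv p_gt0) logn_prime // eqxx. Qed.

Lemma bigOp_natr_prime : bigOp v p%:R 1.
Proof. by right; rewrite pval_natr_prime. Qed.

Lemma bigOp_invr_fact l : (l < p)%N -> bigOp v (l`!%:R)^-1 0.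
Proof.
by move=> lt_lp; apply: (bigOp_invr_natr K0 Hv (prime_ndvd_fact p_pr lt_lp)).
Qed.

Lemma bigOp_coef_truncexp_exp m i : bigOp v (T ^+ m)`_i 0.
Proof.
apply: (bigOp_coefX Hv) => j; rewrite coef_poly.
by case: ifP => [/bigOp_invr_fact //|_]; left.
Qed.

Lemma bigOp_coef_truncexp_exp_ndvd k :
  ~~ (p %| k)%N -> bigOp v (T ^+ p)`_k 1.
Proof.
case: k => [|k]; first by rewrite dvdn0.
move=> p_ndvd; have k1_neq0 := pchar0_natf_neq0 K0 (ltn0Sn k).
have cf_int : bigOp v (p.-1`!%:R)^-1 0.
  by apply: bigOp_invr_fact; rewrite prednK.
have int_rhs : bigOp v ((T ^+ p)`_k -
    (p.-1`!%:R)^-1 * ('X^(p.-1) * T ^+ p.-1)`_k) 0.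
  apply: (bigOpD Hv (bigOp_coef_truncexp_exp _ _)); apply: (bigOpN Hv).
  rewrite -[0 : rat]addr0 coefXnM; apply: (bigOpM Hv cf_int).
  by case: ifP => _; [left | apply: bigOp_coef_truncexp_exp].
rewrite -[_`_k.+1](mulfK k1_neq0) (coef_truncexp_exp_rec K0 p_gt0).
have := bigOpM Hv (bigOpM Hv bigOp_natr_prime int_rhs)
  (bigOp_invr_natr K0 Hv p_ndvd).
by rewrite !addr0.
Qed.

Variable x : K.
Hypothesis x_pow : x ^+ p.-1 = - p%:R.
Local Notation e := ((p.-1)%:R^-1 : rat).

Let p_gt1 : (1 < p)%N := prime_gt1 p_pr.

Lemma pval_root : v x = e.
Proof.
have p_neq0 : (p%:R : K) != 0 := pchar0_natf_neq0 K0 p_gt0.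
have x_neq0 : x != 0.
  apply: contraNneq p_neq0 => x0; move: x_pow.
  rewrite x0 expr0n (_ : (p.-1 == 0)%N = false); last by lia.
  by move/esym/eqP; rewrite oppr_eq0.
have := pvalX Hv p.-1 x_neq0.
rewrite x_pow (pvalN Hv p_neq0) pval_natr_prime => h.
have q_neq0 : (p.-1%:R : rat) != 0 by rewrite pnatr_eq0; lia.
by apply: (mulfI q_neq0); rewrite -h mulfV.
Qed.

Lemma bigOp_root_exp k : bigOp v (x ^+ k) (k%:R * e).
Proof. by apply: (bigOpX Hv); right; rewrite pval_root. Qed.

Lemma bigOp_truncexp_exp_term i :
  (2 <= i)%N -> i != p -> bigOp v ((T ^+ p)`_i * x ^+ i) (2 + e).
Proof.
move=> i_ge2 i_neq_p.
have q_gt0 : (0 : rat) < p.-1%:R by rewrite ltr0n; lia.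
have qe : (p.-1)%:R * e = 1 by rewrite mulfV ?gt_eqF.
have e_ge0 : 0 <= e by rewrite invr_ge0 ltW.
have p_eq : (p%:R : rat) = p.-1%:R + 1 by rewrite natr1 prednK.
have [lt_ip|lt_pi|eq_ip] := ltngtP i p; last by rewrite eq_ip eqxx in i_neq_p.
  rewrite (coef_truncexp_exp_lt K0 p_gt0 lt_ip).
  have c_int :=
    bigOpM Hv (bigOpX Hv i bigOp_natr_prime) (bigOp_invr_fact lt_ip).
  apply: (bigOp_le (bigOpM Hv c_int (bigOp_root_exp i))).
  have : (2 : rat) <= i%:R by rewrite ler_nat.
  nra.
have i_ge : (p.+1%:R : rat) <= i%:R by rewrite ler_nat.
have [p_dvd|p_ndvd] := boolP (p %| i)%N.
  have i_ge2p : ((2 * p)%:R : rat) <= i%:R.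
    by rewrite ler_nat; case/dvdnP: p_dvd lt_pi => [[|[|m]] ->]; nia.
  have c_int := bigOp_coef_truncexp_exp p i.
  apply: (bigOp_le (bigOpM Hv c_int (bigOp_root_exp i))).
  move: i_ge2p; rewrite natrM; nra.
have c_div := bigOp_coef_truncexp_exp_ndvd p_ndvd.
apply: (bigOp_le (bigOpM Hv c_div (bigOp_root_exp i))).
move: i_ge; rewrite -natr1; nra.
Qed.

Lemma bigOp_truncexp_exp_terms_1_p :
  bigOp v ((T ^+ p)`_1 * x + (T ^+ p)`_p * x ^+ p) (2 + e).
Proof.
have [m fact_eq] : exists m, (p.-1)`!.+1 = (m * p)%N.
  by apply/dvdnP; rewrite -Wilson.
have x_powS : x ^+ p = - p%:R * x by rewrite -{1}(prednK p_gt0) exprSr x_pow.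
have p_pow : (p%:R : K) ^+ p.-1 = p%:R * (p ^ p.-2)%:R.
  by rewrite -natrX -natrM -expnS -subn2 -subn1 subnSK ?subn1.
have fact_natr : ((p.-1)`!%:R : K) = m%:R * p%:R - 1.
  by rewrite -natrM -fact_eq -addn1 natrD addrK.
have -> : (T ^+ p)`_1 * x + (T ^+ p)`_p * x ^+ p =
    p%:R * p%:R * x * (p.-1`!%:R)^-1 * (m%:R - (p ^ p.-2)%:R).
  rewrite (coef_truncexp_exp_lt K0 p_gt0 p_gt1).
  rewrite (coef_truncexp_exp_order K0 p_gt0).
  rewrite x_powS p_pow fact_natr expr1 invr1 mulr1.
  by field; rewrite -fact_natr fact_natf_neq0.
have int_diff : bigOp v (m%:R - (p ^ p.-2)%:R) 0.
  exact: (bigOpD Hv (bigOp_natr Hv m) (bigOpN Hv (bigOp_natr Hv _))).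
have cf_int : bigOp v (p.-1`!%:R)^-1 0.
  by apply: bigOp_invr_fact; rewrite prednK.
have ppx := bigOpM Hv (bigOpM Hv bigOp_natr_prime bigOp_natr_prime)
  (bigOp_root_exp 1).
apply: (bigOp_le (bigOpM Hv (bigOpM Hv ppx cf_int) int_diff)).
by rewrite mul1r !addr0 lexx.
Qed.

Lemma bigOp_truncexp_exp_sub1 : bigOp v (T.[x] ^+ p - 1) (2 + e).
Proof.
rewrite -horner_exp (horner_coef_wide (n := p * p)); last first.
  apply: leq_trans (size_poly_exp_leq _ _) _.
  have : (size T <= p)%N := size_poly _ _.
  have := p_gt1; move: (size T) => n ? ?; nia.
have lt_p_pp : (p < p * p)%N by rewrite -{1}[p]muln1 ltn_pmul2l.
rewrite -(big_mkord xpredT (fun i => (T ^+ p)`_i * x ^+ i)).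
have lt_1_pp : (1 < p * p)%N := ltn_trans p_gt1 lt_p_pp.
rewrite big_ltn ?(ltnW lt_1_pp) // big_ltn //.
rewrite (big_cat_nat _ (n := p)) ?(ltnW lt_p_pp) // (big_ltn (m := p)) //.
rewrite (coef0_truncexp_exp _ p_gt0) expr0 mulr1 expr1.
have rearrange (a b c d : K) : 1 + (a + (b + (c + d))) - 1 = (a + c) + (b + d).
  by ring.
rewrite rearrange; apply: (bigOpD Hv bigOp_truncexp_exp_terms_1_p).
by apply: (bigOpD Hv); rewrite big_nat_cond; apply: (bigOp_sum Hv) => i;
  rewrite andbT => /andP[i_ge i_lt]; apply: bigOp_truncexp_exp_term; lia.
Qed.

End TruncatedExpPAdic.

Unset Implicit Arguments.

Theorem proposition3p16 (p : nat) (K : fieldType) (v : K -> rat)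
  (zeta pi : K) :
  prime p -> (3 <= p)%N ->
  [pchar K] =i pred0 ->
  pvaluation p v ->
  (2 * (p - 1))%N.-primitive_root zeta ->
  pi ^+ (p - 1) = p%:R ->
  bigOp v ((\sum_(l < p) (-1) ^+ l / (l`!)%:R * zeta ^+ l * pi ^+ l) ^+ p - 1)
        (2 + ((p - 1)%:R)^-1).
Proof.
move=> p_pr p_ge3 K0 Hv zeta_prim pi_pow; rewrite subn1 in zeta_prim pi_pow *.
have p_odd : odd p by case: (even_prime p_pr) => [p2|//]; rewrite p2 in p_ge3.
have root_pow : (- zeta * pi) ^+ p.-1 = - p%:R.
  rewrite exprMn exprNn (prim_expr_half _ zeta_prim) ?pi_pow; last by lia.
  by rewrite -signr_odd -subn1 oddB ?prime_gt0 // p_odd expr0 mul1r mulN1r.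
have -> : \sum_(l < p) (-1) ^+ l / l`!%:R * zeta ^+ l * pi ^+ l =
    (truncexp p).[- zeta * pi].
  rewrite horner_poly; apply: eq_bigr => l _.
  by rewrite exprMn (exprNn zeta); ring.
exact: (bigOp_truncexp_exp_sub1 K0 Hv p_pr root_pow).
Qed.
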